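(* Let $n\ge 2$ and let $D$ be a domain in $\mathbb{R}^n$ with at least two boundary points. Suppose that $x_0\in D$, $0<t<1$, and $y\in B^n(x_0,t\,d(x_0,\partial D))$. Then $$\frac{1}{C'}\leq\frac{\lambda'_D(x_0)}{\lambda'_D(y)}\leq C',\qquad\text{where } C'=\frac{1+\log\frac{1}{1-t}}{1-t}.$$
   Context: $B^n(x,r)=\{y\in\mathbb{R}^n:|y-x|<r\}$ and $d(z,\partial D)=\inf\{|z-a|:a\in\partial D\}$. For $z\in D$, $$\frac{1}{\lambda'_D(z)}=\inf\Big\{|z-a|\Big(1+\Big|\log\frac{|a-b|}{|z-a|}\Big|\Big): a,b\in\partial D\Big\}$$ (with the convention that the expression equals $+\infty$ when $a=b$). *)

(* Points of R^n are row vectors 'rV[R]_n;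
   the topology is the library's (product) topology on 'rV[R]_n, which is
   the Euclidean topology; distances use the explicit Euclidean norm. *)
From HB Require Import structures.
From mathcomp Require Import all_boot all_order all_algebra.
From mathcomp Require Import all_classical all_reals all_analysis.
Set Implicit Arguments. Unset Strict Implicit. Unset Printing Implicit Defensive.
Import Order.TTheory GRing.Theory Num.Theory.
Import numFieldNormedType.Exports.
Local Open Scope classical_set_scope.
Local Open Scope ring_scope.

Definition enorm {R : realType} {n : nat} (x : 'rV[R]_n) : R :=
  Num.sqrt (\sum_(i < n) x ord0 i ^+ 2).

Definition domain {R : realType} {n : nat} (D : set 'rV[R]_n) : Prop :=
  [/\ D !=set0, open D & connected D].

Definition bdry {R : realType} {n : nat} (D : set 'rV[R]_n) : set 'rV[R]_n :=
  closure D `\` interior D.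

Definition dist_bdry {R : realType} {n : nat} (D : set 'rV[R]_n) (z : 'rV[R]_n) : R :=
  inf [set enorm (z - a) | a in bdry D].

(* 1/lambda'_D(z): the infimum over pairs a <> b of boundary points
   (pairs with a = b give +oo and are omitted) *)
Definition lam_inv {R : realType} {n : nat} (D : set 'rV[R]_n) (z : 'rV[R]_n) : R :=
  inf [set r | exists a b, [/\ bdry D a, bdry D b, a <> b &
        r = enorm (z - a) * (1 + `|ln (enorm (a - b) / enorm (z - a))|)]].

Definition lambda' {R : realType} {n : nat} (D : set 'rV[R]_n) (z : 'rV[R]_n) : R :=
  (lam_inv D z)^-1.

(* For every boundary point a, the distances r = |x0 - a| and r' = |y - a|
   are comparable within the factor K = 1/(1-t), because
   |y - x0| < t d(x0, ∂D) <= t r.  Since |ln(s/r')| <= |ln(s/r)| + ln K,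
   each term r (1 + |ln(|a-b|/r)|) of the infimum defining 1/λ' changes by
   at most the factor K (1 + ln K) = C', and so does the infimum itself. *)
From HB Require Import structures.
From mathcomp Require Import all_boot all_order all_algebra.
From mathcomp Require Import all_classical all_reals all_analysis.
From mathcomp Require Import ring lra.
Import Order.TTheory GRing.Theory Num.Theory.
Import numFieldNormedType.Exports.
Local Open Scope classical_set_scope.
Local Open Scope ring_scope.

Section EuclideanNorm.
Context {R : realType} {n : nat}.
Implicit Types u v w : 'rV[R]_n.

Lemma enorm_ge0 u : 0 <= enorm u.
Proof. exact: sqrtr_ge0. Qed.

Lemma enormN u : enorm (- u) = enorm u.
Proof.
by rewrite /enorm; congr Num.sqrt; apply: eq_bigr => i _; rewrite mxE sqrrN.
Qed.

Lemma enorm_sqr u : enorm u ^+ 2 = \sum_(i < n) u ord0 i ^+ 2.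
Proof. by rewrite sqr_sqrtr // sumr_ge0 // => i _; exact: sqr_ge0. Qed.

Lemma enorm_eq0 u : enorm u = 0 -> u = 0.
Proof.
move=> u0; have /eqP : \sum_(i < n) u ord0 i ^+ 2 = 0.
  by rewrite -enorm_sqr u0 expr0n.
rewrite psumr_eq0 => [/allP ui0|i _]; last exact: sqr_ge0.
apply/rowP => i; rewrite mxE.
by have /= := ui0 i (mem_index_enum _); rewrite sqrf_eq0 => /eqP.
Qed.

Lemma enorm_gt0 u : u != 0 -> 0 < enorm u.
Proof.
move=> u_neq0; rewrite lt_def enorm_ge0 andbT.
by apply: contra_neq u_neq0 => /enorm_eq0.
Qed.

Lemma dot_le_enorm u v : \sum_(i < n) u ord0 i * v ord0 i <= enorm u * enorm v.
Proof.
set a := enorm u; set b := enorm v; set S := \sum_(i < n) _.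
have a0 : 0 <= a by exact: enorm_ge0.
have b0 : 0 <= b by exact: enorm_ge0.
have [/eqP|ab_neq0] := eqVneq (a * b) 0.
  rewrite mulf_eq0 => /orP[] /eqP ab0; rewrite ab0 ?mul0r ?mulr0 /S big1 // => i _.
    by rewrite (enorm_eq0 _ ab0) mxE mul0r.
  by rewrite (enorm_eq0 _ ab0) mxE mulr0.
have ab_gt0 : 0 < a * b by rewrite lt_def ab_neq0 mulr_ge0.
have : 0 <= \sum_(i < n) (u ord0 i * b - v ord0 i * a) ^+ 2.
  by apply: sumr_ge0 => i _; exact: sqr_ge0.
have -> : \sum_(i < n) (u ord0 i * b - v ord0 i * a) ^+ 2 =
          b ^+ 2 * a ^+ 2 - 2 * a * b * S + a ^+ 2 * b ^+ 2.
  rewrite /a /b !enorm_sqr /S !mulr_sumr -!sumrN -!big_split /=.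
  by apply: eq_bigr => i _; rewrite -!enorm_sqr -/a -/b; ring.
nra.
Qed.

Lemma enormD u v : enorm (u + v) <= enorm u + enorm v.
Proof.
rewrite -(ler_pXn2r (n := 2)) ?nnegrE ?addr_ge0 ?enorm_ge0 // enorm_sqr.
have -> : \sum_(i < n) (u + v) ord0 i ^+ 2 = \sum_(i < n) u ord0 i ^+ 2 +
    \sum_(i < n) v ord0 i ^+ 2 + 2 * \sum_(i < n) u ord0 i * v ord0 i.
  rewrite mulr_sumr -!big_split /=.
  by apply: eq_bigr => i _; rewrite mxE; ring.
by rewrite -!enorm_sqr; have := dot_le_enorm u v; nra.
Qed.

Lemma enorm_sub_le u v w : enorm (u - w) <= enorm (u - v) + enorm (v - w).
Proof.
have -> : u - w = (u - v) + (v - w) by rewrite addrA subrK.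
exact: enormD.
Qed.

Lemma enorm_subC u v : enorm (u - v) = enorm (v - u).
Proof. by rewrite -enormN opprB. Qed.

Lemma enorm_comparable_near u v w t : t < 1 ->
  enorm (v - u) <= t * enorm (u - w) ->
  enorm (v - w) <= (1 - t)^-1 * enorm (u - w) /\
  enorm (u - w) <= (1 - t)^-1 * enorm (v - w).
Proof.
move=> t_lt1 vu_le; have t1_gt0 : 0 < 1 - t by lra.
have vu0 := enorm_ge0 (v - u); have uw0 := enorm_ge0 (u - w).
have vw_le := enorm_sub_le v u w.
have uw_le := enorm_sub_le u v w; rewrite [enorm (u - v)]enorm_subC in uw_le.
by rewrite -!ler_pdivrMl ?invr_gt0 // invrK; split; nra.
Qed.

End EuclideanNorm.

Section LogWeight.
Context {R : realType}.
Implicit Types r s K : R.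

Definition lam_term r s := r * (1 + `|ln (s / r)|).

Lemma ln_ratio_le r r' K : 0 < r -> 0 < r' -> r <= K * r' -> ln (r / r') <= ln K.
Proof.
move=> r0 r'0 le_r; have K0 : 0 < K by rewrite -(pmulr_lgt0 _ r'0) (lt_le_trans r0).
by rewrite ler_ln ?posrE ?divr_gt0 // ler_pdivrMr.
Qed.

Lemma norm_ln_ratio_le r r' s K : 0 < r -> 0 < r' -> 0 < s ->
  r' <= K * r -> r <= K * r' -> `|ln (s / r')| <= `|ln (s / r)| + ln K.
Proof.
move=> r0 r'0 s0 le_r' le_r.
have -> : ln (s / r') = ln (s / r) + ln (r / r') by rewrite !ln_div ?posrE //; ring.
apply: (le_trans (ler_normD _ _)); rewrite lerD2l ler_norml ln_ratio_le // andbT lerNl.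
have -> : - ln (r / r') = ln (r' / r) by rewrite !ln_div ?posrE //; ring.
exact: ln_ratio_le.
Qed.

Lemma log_scale_gt0 K : 1 <= K -> 0 < K * (1 + ln K).
Proof. by move=> K_ge1; rewrite mulr_gt0 ?(lt_le_trans ltr01 K_ge1) // ltr_pwDl ?ln_ge0. Qed.

Lemma lam_term_le_scale r r' s K : 0 < r -> 0 < s -> 1 <= K ->
  r' <= K * r -> r <= K * r' -> lam_term r' s <= K * (1 + ln K) * lam_term r s.
Proof.
move=> r0 s0 K1 le_r' le_r; have r'0 : 0 < r' by nra.
have := norm_ln_ratio_le _ _ _ _ r0 r'0 s0 le_r' le_r; rewrite /lam_term.
have := ln_ge0 K1; have := normr_ge0 (ln (s / r)); have := normr_ge0 (ln (s / r')).
set A := `|ln (s / r')|; set B := `|ln (s / r)|; set L := ln K => A0 B0 L0 le_A.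
(* r' (1 + A) <= K r (1 + B + L) <= K r (1 + L) (1 + B) *)
have : r' * (1 + A) <= K * r * (1 + B + L) by nra.
have : 0 <= K * r * (L * B) by rewrite !mulr_ge0 //; lra.
nra.
Qed.

End LogWeight.

Lemma inv_ratio_bounds (R : realFieldType) (a b C : R) : 0 < a -> 0 < b ->
  a <= C * b -> b <= C * a -> 1 / C <= a^-1 / b^-1 <= C.
Proof.
move=> a0 b0 le_a le_b; have C0 : 0 < C by rewrite -(pmulr_lgt0 _ b0) (lt_le_trans a0).
rewrite invrK [_ * b]mulrC ler_pdivrMr // [_ <= C]ler_pdivrMr // le_b andbT.
by rewrite mulrAC ler_pdivlMr // mul1r [b * C]mulrC.
Qed.

Section LambdaPrime.
Context {R : realType} {n : nat} (D : set 'rV[R]_n).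
Hypothesis bdry_pair : exists a b, bdry D a /\ bdry D b /\ a <> b.

Lemma lam_inv_le_scale z w C : 0 < C ->
  (forall a b, bdry D a -> bdry D b -> a <> b ->
     lam_term (enorm (z - a)) (enorm (a - b)) <=
     C * lam_term (enorm (w - a)) (enorm (a - b))) ->
  lam_inv D z <= C * lam_inv D w.
Proof.
move=> C0 le_term; have [a0 [b0 [ha0 [hb0 ab0]]]] := bdry_pair.
rewrite -ler_pdivrMl //; apply: lb_le_inf.
  by exists (lam_term (enorm (w - a0)) (enorm (a0 - b0))), a0, b0.
move=> _ [a [b [ha hb ab ->]]]; rewrite ler_pdivrMl //.
have := le_term a b ha hb ab; rewrite /lam_term => le_ab.
apply: (le_trans _ le_ab); apply: ge_inf; last by exists a, b.
exists 0 => _ [a' [b' [_ _ _ ->]]].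
by rewrite mulr_ge0 ?enorm_ge0 ?addr_ge0.
Qed.

Lemma dist_bdry_le z a : bdry D a -> dist_bdry D z <= enorm (z - a).
Proof.
move=> ha; apply: ge_inf; last by exists a.
by exists 0 => _ [b _ <-]; exact: enorm_ge0.
Qed.

Lemma dist_bdry_le_lam_inv z : dist_bdry D z <= lam_inv D z.
Proof.
have [a0 [b0 [ha0 [hb0 ab0]]]] := bdry_pair.
apply: lb_le_inf.
  by exists (lam_term (enorm (z - a0)) (enorm (a0 - b0))), a0, b0.
move=> _ [a [b [ha _ _ ->]]]; apply: (le_trans (dist_bdry_le z a ha)).
by rewrite ler_peMr ?enorm_ge0 // lerDl.
Qed.

Lemma dist_bdry_gt0_near x y t : 0 < t ->
  enorm (y - x) < t * dist_bdry D x -> 0 < dist_bdry D x.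
Proof.
move=> t_gt0 y_near; rewrite -(pmulr_rgt0 _ t_gt0).
by apply: le_lt_trans y_near; exact: enorm_ge0.
Qed.

Lemma enorm_bdry_comparable x y t a : 0 < t -> t < 1 ->
  enorm (y - x) < t * dist_bdry D x -> bdry D a ->
  [/\ 0 < enorm (x - a), 0 < enorm (y - a),
      enorm (y - a) <= (1 - t)^-1 * enorm (x - a) &
      enorm (x - a) <= (1 - t)^-1 * enorm (y - a)].
Proof.
move=> t_gt0 t_lt1 y_near ha; have d_le := dist_bdry_le x a ha.
have d_gt0 := dist_bdry_gt0_near x y t t_gt0 y_near.
have [le_ya le_xa] := enorm_comparable_near x y a t t_lt1
  (le_trans (ltW y_near) (ler_wpM2l (ltW t_gt0) d_le)).
have xa_gt0 := lt_le_trans d_gt0 d_le.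
split => //; rewrite -(pmulr_rgt0 _ (_ : 0 < (1 - t)^-1)) ?invr_gt0 ?subr_gt0 //.
exact: lt_le_trans le_xa.
Qed.

Lemma lam_inv_le_comparable z w K : 1 <= K ->
  (forall a, bdry D a -> [/\ 0 < enorm (w - a),
     enorm (z - a) <= K * enorm (w - a) & enorm (w - a) <= K * enorm (z - a)]) ->
  lam_inv D z <= K * (1 + ln K) * lam_inv D w.
Proof.
move=> K_ge1 zw_near.
apply: lam_inv_le_scale => [|a b ha hb ab]; first exact: log_scale_gt0.
have [wa_gt0 le_za le_wa] := zw_near a ha.
apply: lam_term_le_scale => //; apply: enorm_gt0; rewrite subr_eq0; exact/eqP.
Qed.

End LambdaPrime.

Theorem lemma9 (R : realType) (n : nat) (D : set 'rV[R]_n)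
  (x0 y : 'rV[R]_n) (t : R) :
  (2 <= n)%N -> domain D ->
  (exists a b, bdry D a /\ bdry D b /\ a <> b) ->
  D x0 -> 0 < t -> t < 1 ->
  enorm (y - x0) < t * dist_bdry D x0 ->
  let C' := (1 + ln (1 / (1 - t))) / (1 - t) in
  1 / C' <= lambda' D x0 / lambda' D y <= C'.
Proof.
move=> _ _ bdry_pair _ t_gt0 t_lt1 y_near /=.
set K := (1 - t)^-1.
have K_ge1 : 1 <= K by rewrite invr_ge1 ?unitfE ?gt_eqF //; lra.
have -> : (1 + ln (1 / (1 - t))) / (1 - t) = K * (1 + ln K) by rewrite div1r mulrC.
have C_gt0 := log_scale_gt0 K K_ge1.
have near a := enorm_bdry_comparable D x0 y t a t_gt0 t_lt1 y_near.
have le_x0 : lam_inv D x0 <= K * (1 + ln K) * lam_inv D y.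
  by apply: lam_inv_le_comparable => // a /near[].
have le_y : lam_inv D y <= K * (1 + ln K) * lam_inv D x0.
  by apply: lam_inv_le_comparable => // a /near[].
have x0_gt0 : 0 < lam_inv D x0.
  apply: lt_le_trans (dist_bdry_le_lam_inv D bdry_pair x0).
  exact: dist_bdry_gt0_near D x0 y t t_gt0 y_near.
have y_gt0 : 0 < lam_inv D y by rewrite -(pmulr_rgt0 _ C_gt0) (lt_le_trans x0_gt0).
exact: inv_ratio_bounds.
Qed.
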